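(* Let $U(y)=\sum_{k\in\mathbb Z^m_+,\ \max_jk_j\le n}c_ky^k$ be a polynomial in $m$ variables with complex coefficients of degree at most $n$ in each variable. (a) If $0<A<B$, then $$\sum_k|c_k|\le\Big[T_n\Big(\frac{B+A+2}{B-A}\Big)\Big]^m\|U\|_{C([A,B]^m)}.$$ (b) If $b>0$, then $$\sum_k|c_k|\le\Big(\frac{e^{b/4}+e^{-b/4}}{e^{b/4}-e^{-b/4}}\Big)^{mn}\|U\|_{C([e^{-b},e^b]^m)}.$$
   Context: $T_n(u)=\frac12((u+\sqrt{u^2-1})^n+(u-\sqrt{u^2-1})^n)$ is the Chebyshev polynomial of the first kind; $[A,B]^m$ is the cube $\{y\in\mathbb R^m:A\le y_j\le B\ \forall j\}$; $y^k=\prod_jy_j^{k_j}$; $\|U\|_{C(S)}=\max_S|U|$. *)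

From HB Require Import structures.
From mathcomp Require Import all_boot all_order all_algebra.
From mathcomp Require Import all_classical all_reals.
From mathcomp.analysis Require Import sequences exp.
From mathcomp Require Import complex.
Set Implicit Arguments. Unset Strict Implicit. Unset Printing Implicit Defensive.
Import Order.TTheory GRing.Theory Num.Theory.
Local Open Scope ring_scope.
Local Open Scope complex_scope.

Definition cabs (R : realType) (z : R[i]) : R := Normc.normc z.

(* Chebyshev polynomial of the first kind, via the paper's formula
   T_n(u) = ((u + sqrt(u^2-1))^n + (u - sqrt(u^2-1))^n)/2  (used for u >= 1) *)
Definition cheb (R : realType) (n : nat) (u : R) : R :=
  ((u + Num.sqrt (u ^+ 2 - 1)) ^+ n + (u - Num.sqrt (u ^+ 2 - 1)) ^+ n) / 2.

Notation mindex m n := {ffun 'I_m -> 'I_n.+1}.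

Definition monom (R : realType) (m n : nat) (k : mindex m n) (y : 'I_m -> R) : R :=
  \prod_(j < m) y j ^+ k j.

Definition polyU (R : realType) (m n : nat) (c : mindex m n -> R[i])
  (y : 'I_m -> R) : R[i] :=
  \sum_(k : mindex m n) c k * (monom k y)%:C.

Definition cube (R : realType) (m : nat) (A B : R) : set ('I_m -> R) :=
  [set y | forall j, A <= y j <= B].

Definition supnorm (R : realType) (m n : nat) (c : mindex m n -> R[i])
  (S : set ('I_m -> R)) : R :=
  sup [set cabs (polyU c y) | y in S].

Arguments cube {R} m A B.

From HB Require Import structures.
From mathcomp Require Import all_boot all_order all_algebra.
From mathcomp Require Import all_classical all_reals.
From mathcomp.analysis Require Import sequences exp trigo.
From mathcomp Require Import complex.
From mathcomp Require Import ring lra.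
Import Order.TTheory GRing.Theory Num.Theory.
Set Implicit Arguments. Unset Strict Implicit. Unset Printing Implicit Defensive.
Local Open Scope ring_scope.

(* In one variable, Lagrange interpolation at nodes y_0 > ... > y_n > 0 of
   [[A, B]] writes every coefficient of U as a combination of the values
   U(y_i), so sum_k |c_k| <= ||U|| * sum_i sum_b |coef_b l_i| for the Lagrange
   basis l_i.  The roots of l_i are positive, hence its coefficients alternate
   in sign and sum_b |coef_b l_i| = (-1)^(n+i) l_i(-1).  Choosing for y_i the
   extremal points of Q = T_n o (affine map [A, B] -> [-1, 1]), where
   Q(y_i) = (-1)^i, the total is (-1)^n Q(-1) = T_n((B + A + 2)/(B - A)).  In
   m variables the tensor product of the interpolation formulas raises this
   constant to the m-th power.  For A = e^-b, B = e^b the argument of T_n is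
   (v + 1/v)/2 with v = coth(b/4), and T_n((v + 1/v)/2) = (v^n + v^-n)/2 <= v^n. *)

Lemma nat_ind2 (P : nat -> Prop) :
  P 0 -> P 1 -> (forall n, P n -> P n.+1 -> P n.+2) -> forall n, P n.
Proof.
move=> P0 P1 PSS n; suff [] : P n /\ P n.+1 by [].
by elim: n => [|n [Pn PSn]]; split => //; apply: PSS.
Qed.

Section Chebyshev.
Variable R : comNzRingType.

(* [chebyshev_pair n = (T_n, T_(n+1))] *)
Fixpoint chebyshev_pair (n : nat) : {poly R} * {poly R} :=
  if n is n'.+1 then let: (p, q) := chebyshev_pair n' in (q, 2%:P * 'X * q - p)
  else (1, 'X).

Definition chebyshev (n : nat) : {poly R} := (chebyshev_pair n).1.

Lemma chebyshev0 : chebyshev 0 = 1. Proof. by []. Qed.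
Lemma chebyshev1 : chebyshev 1 = 'X. Proof. by []. Qed.

Lemma chebyshevSS n :
  chebyshev n.+2 = 2%:P * 'X * chebyshev n.+1 - chebyshev n.
Proof. by rewrite /chebyshev /=; case: (chebyshev_pair n). Qed.

Lemma size_chebyshev n : (size (chebyshev n) <= n.+1)%N.
Proof.
elim/nat_ind2: n => [|| n IH1 IH2]; first by rewrite chebyshev0 size_poly1.
  by rewrite chebyshev1 size_polyX.
rewrite chebyshevSS (leq_trans (size_polyD _ _)) // geq_max size_polyN.
apply/andP; split; last by rewrite (leq_trans IH1) // ltnW.
rewrite -mulrA mul_polyC (leq_trans (size_scale_leq _ _)) //.
by rewrite (leq_trans (size_polyMleq _ _)) // size_polyX.
Qed.

Lemma chebyshevN n x :
  (chebyshev n).[- x] = (-1) ^+ n * (chebyshev n).[x].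
Proof.
elim/nat_ind2: n => [|| n IH1 IH2]; first by rewrite chebyshev0 !hornerE.
  by rewrite chebyshev1 !hornerX mulN1r.
by rewrite chebyshevSS !hornerE IH1 IH2 !exprS; ring.
Qed.

End Chebyshev.

Section RealChebyshev.
Variable R : realType.

Lemma horner_chebyshev_cos n (t : R) :
  (chebyshev R n).[cos t] = cos (n%:R * t).
Proof.
elim/nat_ind2: n => [|| n IH1 IH2]; first by rewrite chebyshev0 hornerE mul0r cos0.
  by rewrite chebyshev1 hornerX mul1r.
rewrite chebyshevSS !hornerE IH1 IH2.
have -> : n.+2%:R * t = n.+1%:R * t + t by rewrite -addn1 natrD mulrDl mul1r.
have -> : n%:R * t = n.+1%:R * t - t by rewrite -addn1 natrD mulrDl mul1r addrK.
by rewrite !cosD cosN sinN; ring.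
Qed.

Lemma horner_chebyshev_cheb n (u : R) : 1 <= u ^+ 2 -> (chebyshev R n).[u] = cheb n u.
Proof.
move=> u2_ge1; rewrite /cheb; set s := Num.sqrt _.
have s2 : s ^+ 2 = u ^+ 2 - 1 by rewrite sqr_sqrtr // subr_ge0.
have pow_rec a : a ^+ 2 = 2 * u * a - 1 ->
    forall k, a ^+ k.+2 = 2 * u * a ^+ k.+1 - a ^+ k.
  by move=> a2 k; rewrite -(addn2 k) exprD a2 -(addn1 k) exprD expr1; ring.
have sqrP : (u + s) ^+ 2 = 2 * u * (u + s) - 1 by rewrite !expr2 in s2 *; nra.
have sqrM : (u - s) ^+ 2 = 2 * u * (u - s) - 1 by rewrite !expr2 in s2 *; nra.
elim/nat_ind2: n => [|| n IH1 IH2]; first by rewrite chebyshev0 hornerE !expr0; field.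
  by rewrite chebyshev1 hornerX !expr1; field.
by rewrite chebyshevSS !hornerE IH1 IH2 (pow_rec _ sqrP) (pow_rec _ sqrM); field.
Qed.

Lemma cheb_joukowski n (v : R) : 0 < v ->
  cheb n ((v + v^-1) / 2) = (v ^+ n + v^-1 ^+ n) / 2.
Proof.
move=> v_gt0; have v_neq0 : v != 0 by rewrite gt_eqF.
rewrite /cheb; set u := (v + v^-1) / 2.
have -> : u ^+ 2 - 1 = ((v - v^-1) / 2) ^+ 2 by rewrite /u; field.
rewrite sqrtr_sqr; have [d_ge0 | d_lt0] := lerP 0 ((v - v^-1) / 2).
  by rewrite ger0_norm //; congr ((_ ^+ n + _ ^+ n) / 2); rewrite /u; field.
by rewrite ltr0_norm // addrC; congr ((_ ^+ n + _ ^+ n) / 2); rewrite /u; field.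
Qed.

Lemma cheb_joukowski_bound n (v : R) : 1 <= v ->
  0 <= cheb n ((v + v^-1) / 2) <= v ^+ n.
Proof.
move=> v_ge1; have v_gt0 : 0 < v by apply: lt_le_trans v_ge1.
have vV_ge0 : 0 <= v^-1 by rewrite invr_ge0 ltW.
have vV_le : v^-1 ^+ n <= v ^+ n.
  by rewrite lerXn2r ?nnegrE ?(ltW v_gt0) // (le_trans _ v_ge1) // invf_le1.
rewrite cheb_joukowski // divr_ge0 ?addr_ge0 ?exprn_ge0 ?(ltW v_gt0) //=.
by rewrite ler_pdivrMr // mulr_natr mulr2n lerD2l.
Qed.

End RealChebyshev.

Section AlternatingCoefficients.
Variable R : realDomainType.

Lemma prod_XsubC_coef_sign (r : seq R) b : all (>= 0) r ->
  0 <= (-1) ^+ (size r + b) * (\prod_(a <- r) ('X - a%:P))`_b.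
Proof.
elim: r b => [|a r IH] b.
  by rewrite big_nil coef1; case: b => [|b] //=; rewrite ?mulr0 // mulr1.
case/andP=> a_ge0 r_ge0; have {}IH b' := IH b' r_ge0.
rewrite big_cons mulrBl coefB coefXM coefCM /=.
set p := \prod_(_ <- r) _ in IH *; case: b => [|b] /=.
  have -> : (-1) ^+ ((size r).+1 + 0) * (0 - a * p`_0) =
      a * ((-1) ^+ (size r + 0) * p`_0) by rewrite !addn0 exprS; ring.
  exact: mulr_ge0 a_ge0 (IH 0).
have -> : (-1) ^+ ((size r).+1 + b.+1) * (p`_b - a * p`_b.+1) =
    (-1) ^+ (size r + b) * p`_b + a * ((-1) ^+ (size r + b.+1) * p`_b.+1).
  by rewrite addSn addnS !exprS; ring.
exact: addr_ge0 (IH b) (mulr_ge0 a_ge0 (IH b.+1)).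
Qed.

Lemma sum_norm_coef_alternating (p : {poly R}) n :
  (size p <= n.+1)%N -> (forall b, 0 <= (-1) ^+ (n + b) * p`_b) ->
  \sum_(b < n.+1) `|p`_b| = (-1) ^+ n * p.[-1].
Proof.
move=> size_p p_alt; rewrite (horner_coef_wide _ size_p) mulr_sumr.
apply: eq_bigr => b _.
have -> : `|p`_b| = (-1) ^+ (n + b) * p`_b.
  by rewrite -(ger0_norm (p_alt b)) normrM normrX normrN1 expr1n mul1r.
by rewrite exprD; ring.
Qed.

End AlternatingCoefficients.

Section LagrangeCoefficients.
Variables (K : fieldType) (n : nat) (x : nat -> K).
Hypothesis x_inj : injective x.
Local Notation L := (tnth (n.+1.-lagrange x)).

Lemma lagrange_coef_vandermonde (a b : 'I_n.+1) :
  \sum_(i < n.+1) x i ^+ a * (L i)`_b = (a == b)%:R.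
Proof.
have sizeXa : (size ('X^a : {poly K}) <= n.+1)%N by rewrite size_polyXn.
have /(congr1 (coefp b)) := lagrange_gen (ltn0Sn n) x_inj sizeXa.
rewrite /= coefXn coef_sum eq_sym => ->; apply: eq_bigr => i _.
by rewrite coefCM hornerXn.
Qed.

End LagrangeCoefficients.

Section DecreasingNodes.
Variables (R : realFieldType) (n : nat) (x : nat -> R).
Hypothesis x_decr : forall j k, (j < k)%N -> x k < x j.
Hypothesis x_ge0 : forall j, (j <= n)%N -> 0 <= x j.
Local Notation L := (tnth (n.+1.-lagrange x)).

Lemma decreasing_inj : injective x.
Proof.
move=> j k xjk; case: (ltngtP j k) => // [/x_decr | /x_decr]; by rewrite xjk ltxx.
Qed.

Lemma node_poly_sign (i : 'I_n.+1) :
  0 < (-1) ^+ i * (\prod_(j < n.+1 | j != i) ('X - (x j)%:P)).[x i].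
Proof.
rewrite horner_prod; under eq_bigr do rewrite hornerXsubC.
rewrite -(big_mkord (fun j => j != i) (fun j => x i - x j)).
rewrite (big_cat_nat (leq0n i) (ltnW (ltn_ord i))) /=.
rewrite [\prod_(i <= j < n.+1 | _) _]big_ltn_cond // eqxx /=.
have -> : \prod_(0 <= j < i | j != i) (x i - x j) = \prod_(j < i) - (x j - x i).
  rewrite big_mkord; apply: eq_big => [j|j _]; first by rewrite neq_ltn ltn_ord.
  by rewrite opprB.
rewrite prodrN card_ord !mulrA -expr2 sqrr_sign mul1r mulr_gt0 //.
  by apply: prodr_gt0 => j _; rewrite subr_gt0 x_decr.
rewrite big_nat_cond; apply: prodr_gt0 => j /andP [/andP [ij _] _].
by rewrite subr_gt0 x_decr.
Qed.

Lemma sum_norm_lagrange_coef (i : 'I_n.+1) :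
  \sum_(b < n.+1) `|(L i)`_b| = (-1) ^+ (n + i) * (L i).[-1].
Proof.
rewrite (lagrangeE (ltn0Sn n) decreasing_inj) /=.
have := node_poly_sign i; set p := \prod_(_ < _ | _) _ => p_node_gt0.
set nodes := [seq x j | j : 'I_n.+1 <- [seq j <- index_enum 'I_n.+1 | j != i]].
have pE : p = \prod_(a <- nodes) ('X - a%:P) by rewrite big_map big_filter.
have size_nodes : size nodes = n.
  have := cardC1 i; rewrite card_ord /= => <-.
  by rewrite size_map size_filter cardE /enum_mem size_filter.
have p_alt b : 0 <= (-1) ^+ (n + b) * p`_b.
  rewrite pE -{1}size_nodes prod_XsubC_coef_sign //.
  by apply/allP => _ /mapP [j _ ->]; apply/x_ge0/leq_ord.
have size_p : (size p <= n.+1)%N by rewrite pE size_prod_XsubC size_nodes.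
under eq_bigr do rewrite coefCM normrM.
have norm_p_node : `|p.[x i]| = (-1) ^+ i * p.[x i].
  by rewrite -(gtr0_norm p_node_gt0) normrM normrX normrN1 expr1n mul1r.
rewrite -mulr_sumr sum_norm_coef_alternating // hornerCM normfV norm_p_node.
by rewrite invr_signM exprD; ring.
Qed.

End DecreasingNodes.

Section ChebyshevNodes.
Variables (R : realType) (A B : R) (n : nat).
Hypothesis AB : A < B.

(* The extremal points of [T_n] moved to [[A, B]], continued past [n] by a
   decreasing sequence so as to obtain the injective node sequence that
   [lagrange] expects. *)
Definition cheb_node (j : nat) : R :=
  if (j <= n)%N then (B - A) / 2 * cos (j%:R * pi / n%:R) + (B + A) / 2
  else A - j%:R.

Definition cheb_shift : {poly R} :=
  (2 / (B - A)) *: 'X - ((B + A) / (B - A))%:P.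

Lemma cheb_angle_in (j : nat) : (j <= n)%N -> (j%:R * pi / n%:R : R) \in `[0, pi].
Proof.
move=> jn; rewrite in_itv /=; apply/andP; split.
  by rewrite mulr_ge0 ?invr_ge0 ?mulr_ge0 ?pi_ge0.
case: n jn => [|n'] jn; first by rewrite invr0 mulr0 pi_ge0.
by rewrite ler_pdivrMr ?ltr0n // mulrC ler_wpM2l ?pi_ge0 ?ler_nat.
Qed.

Lemma cheb_node_in (j : nat) : (j <= n)%N -> A <= cheb_node j <= B.
Proof.
move=> jn; rewrite /cheb_node jn; set c := cos _.
have c_le1 : c <= 1 by apply: cos_le1.
have c_geN1 : -1 <= c by apply: cos_geN1.
have A_le_B : A <= B := ltW AB.
have : 0 <= (B - A) * (1 - c) by apply: mulr_ge0; lra.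
have : 0 <= (B - A) * (c + 1) by apply: mulr_ge0; lra.
by move=> *; apply/andP; split; lra.
Qed.

Lemma cheb_node_decr (j k : nat) : (j < k)%N -> cheb_node k < cheb_node j.
Proof.
move=> jk; rewrite /cheb_node; case: (leqP k n) => kn.
  rewrite (leq_trans (ltnW jk) kn) ltrD2r ltr_pM2l ?divr_gt0 ?subr_gt0 //.
  rewrite ltr_cos ?cheb_angle_in ?(leq_trans (ltnW jk)) //.
  have n_gt0 : 0 < n%:R :> R by rewrite ltr0n (leq_trans _ kn) // (leq_ltn_trans _ jk).
  by rewrite ltr_pM2r ?invr_gt0 // ltr_pM2r ?pi_gt0 // ltr_nat.
case: (leqP j n) => jn; last by rewrite ltrD2l ltrN2 ltr_nat.
have /andP [A_le _] := cheb_node_in jn; rewrite /cheb_node jn in A_le.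
by apply: lt_le_trans A_le; rewrite ltrBlDr ltrDl ltr0n (leq_ltn_trans _ kn).
Qed.

Lemma horner_cheb_shift_node (j : nat) : (j <= n)%N ->
  (cheb_shift).[cheb_node j] = cos (j%:R * pi / n%:R).
Proof.
move=> jn; rewrite /cheb_shift /cheb_node jn !hornerE; field.
by rewrite subr_eq0 gt_eqF.
Qed.

Lemma chebyshev_shift_node (j : nat) : (j <= n)%N ->
  (chebyshev R n \Po cheb_shift).[cheb_node j] = (-1) ^+ j.
Proof.
move=> jn; rewrite horner_comp horner_cheb_shift_node // horner_chebyshev_cos.
case: n jn => [|n'] jn; first by move: jn; rewrite leqn0 => /eqP ->; rewrite !mul0r cos0.
rewrite mulrCA divff ?pnatr_eq0 // mulr1.
elim: j {jn} => [|j IH]; first by rewrite mul0r cos0.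
by rewrite -addn1 natrD mulrDl mul1r cosDpi IH exprD expr1 mulrN1.
Qed.

Lemma size_chebyshev_shift : (size (chebyshev R n \Po cheb_shift) <= n.+1)%N.
Proof.
rewrite (leq_trans (size_comp_poly_leq _ _)) // ltnS.
have size_shift : (size cheb_shift <= 2)%N.
  rewrite (leq_trans (size_polyD _ _)) // geq_max size_polyN size_polyC.
  by rewrite (leq_trans (size_scale_leq _ _)) ?size_polyX //; case: (_ != 0).
rewrite -[X in (_ <= X)%N]muln1 leq_mul //.
  by move: (size_chebyshev R n); case: size.
by move: size_shift; case: (size _) => [|[|[|]]].
Qed.

Lemma horner_cheb_shiftN1 :
  (cheb_shift).[-1] = - ((B + A + 2) / (B - A)).
Proof.
rewrite /cheb_shift hornerD hornerN hornerZ hornerX hornerC; field.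
by rewrite subr_eq0 gt_eqF.
Qed.

Lemma sum_norm_lagrange_cheb_node : 0 < A ->
  \sum_(i < n.+1) \sum_(b < n.+1) `|(tnth (n.+1.-lagrange cheb_node) i)`_b| =
  cheb n ((B + A + 2) / (B - A)).
Proof.
move=> A_gt0; have node_ge0 j : (j <= n)%N -> 0 <= cheb_node j.
  by move=> /cheb_node_in /andP [A_le _]; apply: le_trans (ltW A_gt0) A_le.
under eq_bigr do rewrite (sum_norm_lagrange_coef cheb_node_decr node_ge0).
have interp :=
  lagrange_gen (ltn0Sn n) (decreasing_inj cheb_node_decr) size_chebyshev_shift.
transitivity ((-1) ^+ n * (chebyshev R n \Po cheb_shift).[-1]).
  rewrite [in RHS]interp horner_sum mulr_sumr; apply: eq_bigr => i _.
  by rewrite hornerCM chebyshev_shift_node ?leq_ord // exprD mulrA.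
have u_ge1 : 1 <= (B + A + 2) / (B - A).
  by rewrite ler_pdivlMr ?subr_gt0 // mul1r; lra.
rewrite horner_comp horner_cheb_shiftN1 chebyshevN mulrA -expr2 sqrr_sign mul1r.
by rewrite horner_chebyshev_cheb // exprn_ege1.
Qed.

End ChebyshevNodes.

Section ComplexModulus.
Variable R : realType.
Local Open Scope complex_scope.

Lemma normc_cabs (z : R[i]) : `|z| = (cabs z)%:C.
Proof. by case: z => a b; rewrite normc_def. Qed.

Lemma cabs_ge0 (z : R[i]) : 0 <= cabs z.
Proof. by case: z => a b; rewrite /cabs /= sqrtr_ge0. Qed.

Lemma cabsM (z w : R[i]) : cabs (z * w) = cabs z * cabs w.
Proof. exact: Normc.normcM. Qed.

Lemma cabs_real (x : R) : cabs x%:C = `|x|.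
Proof. by rewrite /cabs /= expr0n /= addr0 sqrtr_sqr. Qed.

Lemma ler_cabs_sum (I : Type) (r : seq I) (P : pred I) (F : I -> R[i]) :
  cabs (\sum_(i <- r | P i) F i) <= \sum_(i <- r | P i) cabs (F i).
Proof.
rewrite -lecR -normc_cabs rmorph_sum (eq_bigr _ (fun i _ => esym (normc_cabs (F i)))).
exact: ler_norm_sum.
Qed.

End ComplexModulus.

Section SupNorm.
Variables (R : realType) (m n : nat) (c : mindex m n -> R[i]) (A B : R).

Lemma le_supnorm_cube (y : 'I_m -> R) :
  cube m A B y -> cabs (polyU c y) <= supnorm c (cube m A B).
Proof.
move=> y_in; apply: ub_le_sup; last by exists y.
exists (\sum_(k : mindex m n) cabs (c k) * \prod_(j < m) (`|A| + `|B|) ^+ k j).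
move=> _ [z z_in <-]; apply: le_trans (ler_cabs_sum _ _ _) _.
apply: ler_sum => k _; rewrite cabsM cabs_real ler_wpM2l ?cabs_ge0 //.
rewrite /monom normr_prod; apply: ler_prod => j _; rewrite normr_ge0 normrX /=.
rewrite lerXn2r ?nnegrE ?addr_ge0 ?normr_ge0 //.
have /andP [Az zB] := z_in j; rewrite ler_norml.
have := ler_norm A; have := ler_norm (- A); have := ler_norm B; have := ler_norm (- B).
by rewrite !normrN => *; apply/andP; split; lra.
Qed.

Lemma supnorm_cube_ge0 : A <= B -> 0 <= supnorm c (cube m A B).
Proof.
move=> A_le_B; apply: le_trans (cabs_ge0 (polyU c (fun=> B))) _.
by apply: le_supnorm_cube => j; rewrite A_le_B lexx.
Qed.

End SupNorm.

Section TensorInterpolation.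
Variables (R : realType) (m n : nat) (c : mindex m n -> R[i]).
Local Open Scope complex_scope.

Lemma polyU_coef_interp (y : nat -> R) (l : 'I_n.+1 -> 'I_n.+1 -> R) :
  (forall a b : 'I_n.+1, \sum_(i < n.+1) y i ^+ a * l i b = (a == b)%:R) ->
  forall k, c k = \sum_(I : mindex m n)
    polyU c (fun j => y (I j)) * (\prod_(j < m) l (I j) (k j))%:C.
Proof.
move=> l_inv k.
transitivity (\sum_(k' : mindex m n) c k' * ((k' == k)%:R)%:C).
  rewrite (bigD1 k) //= eqxx mulr1 big1 ?addr0 // => k' /negbTE ->.
  by rewrite mulr0.
rewrite /polyU; under [RHS]eq_bigr do rewrite mulr_suml.
rewrite [RHS]exchange_big /=; apply: eq_bigr => k' _.
under eq_bigr do rewrite -mulrA -rmorphM.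
rewrite -mulr_sumr -rmorph_sum; congr (_ * _%:C).
rewrite /monom; under eq_bigr do rewrite -big_split /=.
rewrite -(bigA_distr_bigA (fun (j : 'I_m) (i : 'I_n.+1) => y i ^+ k' j * l i (k j))) /=.
under eq_bigr do rewrite l_inv.
have [->|k'_neq_k] := eqVneq k' k; first by rewrite big1 // => j _; rewrite eqxx.
have [j k'j_neq_kj] : exists j, k' j != k j.
  apply/existsP; apply: contraR k'_neq_k => /existsPn k'_eq_k.
  by apply/eqP/ffunP => j; apply/eqP/negPn.
by rewrite (bigD1 j) //= (negbTE k'j_neq_kj) mul0r.
Qed.

End TensorInterpolation.

Lemma sum_cabs_coef_le_cheb (R : realType) (m n : nat) (c : mindex m n -> R[i])
    (A B : R) :
  0 < A -> A < B ->
  \sum_(k : mindex m n) cabs (c k)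
    <= cheb n ((B + A + 2) / (B - A)) ^+ m * supnorm c (cube m A B).
Proof.
move=> A_gt0 AB; rewrite -(sum_norm_lagrange_cheb_node n AB A_gt0).
set y := cheb_node A B n; set M := supnorm c (cube m A B).
pose l (i b : 'I_n.+1) := (tnth (n.+1.-lagrange y) i)`_b.
have l_inv (a b : 'I_n.+1) : \sum_(i < n.+1) y i ^+ a * l i b = (a == b)%:R.
  exact: lagrange_coef_vandermonde (decreasing_inj (cheb_node_decr n AB)) a b.
have coef_le k : cabs (c k) <= \sum_(I : mindex m n) M * \prod_(j < m) `|l (I j) (k j)|.
  rewrite {1}(polyU_coef_interp c l_inv k); apply: le_trans (ler_cabs_sum _ _ _) _.
  apply: ler_sum => I _; rewrite cabsM cabs_real normr_prod ler_wpM2r ?prodr_ge0 //.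
  by apply: le_supnorm_cube => j; apply: cheb_node_in AB _ (leq_ord _).
apply: le_trans (ler_sum _ (fun k _ => coef_le k)) _; rewrite exchange_big /=.
rewrite (eq_bigr (fun I : mindex m n =>
    M * \prod_(j < m) \sum_(b < n.+1) `|l (I j) b|)); last first.
  by move=> I _; rewrite -mulr_sumr bigA_distr_bigA.
rewrite -mulr_sumr -(bigA_distr_bigA (fun (j : 'I_m) i => \sum_(b < n.+1) `|l i b|)) /=.
by rewrite prodr_const card_ord mulrC.
Qed.

Lemma sum_cabs_coef_le_expR (R : realType) (m n : nat) (c : mindex m n -> R[i])
    (b : R) :
  0 < b ->
  \sum_(k : mindex m n) cabs (c k)
    <= ((expR (b / 4) + expR (- (b / 4))) / (expR (b / 4) - expR (- (b / 4))))
         ^+ (m * n) * supnorm c (cube m (expR (- b)) (expR b)).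
Proof.
move=> b_gt0; rewrite expRN; set a := expR (b / 4).
have a_gt1 : 1 < a by rewrite expR_gt1 divr_gt0.
have a_gt0 : 0 < a := lt_trans ltr01 a_gt1.
have expRb : expR b = a ^+ 4 by rewrite -expRM_natl; congr expR; field.
rewrite expRN expRb -exprVn.
set v := (a + a^-1) / (a - a^-1).
have aV_gt0 : 0 < a^-1 by rewrite invr_gt0.
have aV_lt_a : a^-1 < a by rewrite (lt_trans _ a_gt1) // invf_lt1.
have v_ge1 : 1 <= v by rewrite ler_pdivlMr ?subr_gt0 // mul1r; lra.
have A_lt_B : a^-1 ^+ 4 < a ^+ 4 by rewrite ltrXn2r // ltW.
have u_eq : (a ^+ 4 + a^-1 ^+ 4 + 2) / (a ^+ 4 - a^-1 ^+ 4) = (v + v^-1) / 2.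
  rewrite /v; field; have a2_gt1 : 1 < a * a by nra.
  apply/and4P; split; apply: lt0r_neq0; rewrite // ?subr_gt0 ?exprn_egt1 //; lra.
apply: le_trans (sum_cabs_coef_le_cheb c (exprn_gt0 4 aV_gt0) A_lt_B) _.
rewrite u_eq mulnC exprM; apply: ler_wpM2r; first exact: supnorm_cube_ge0 (ltW A_lt_B).
have /andP [cheb_ge0 cheb_le] := cheb_joukowski_bound n v_ge1.
by rewrite lerXn2r ?nnegrE ?exprn_ge0 ?(le_trans ler01 v_ge1).
Qed.

Unset Implicit Arguments.

Theorem lemmaL2p6 (R : realType) (m n : nat) (c : mindex m n -> R[i]) :
  (forall A B : R, 0 < A -> A < B ->
     \sum_(k : mindex m n) cabs (c k)
       <= cheb n ((B + A + 2) / (B - A)) ^+ m * supnorm c (cube m A B)) /\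
  (forall b : R, 0 < b ->
     \sum_(k : mindex m n) cabs (c k)
       <= ((expR (b / 4) + expR (- (b / 4))) / (expR (b / 4) - expR (- (b / 4))))
            ^+ (m * n) * supnorm c (cube m (expR (- b)) (expR b))).
Proof.
split => [A B | b]; [exact: sum_cabs_coef_le_cheb | exact: sum_cabs_coef_le_expR].
Qed.
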